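(* Let $G=(V,E)$ be a finite, simple, undirected, connected graph with no isolated vertices. Then $k(G)\le \gamma_s(G)$; if $G$ has a split irredundant set then $k(G)\le ir_s(G)$; and if $G$ has a split independent set then $k(G)\le i_s(G)$.
   Context: For $X\subseteq V$, $\langle X\rangle$ denotes the induced subgraph on $X$, and $N[X]$ the closed neighborhood of $X$. A vertex cut set is a set $S\subseteq V$ such that $\langle V\setminus S\rangle$ is a $K_1$ or disconnected; the connectivity $k(G)$ is the minimum size of a vertex cut set. A dominating set $S$ (every vertex outside $S$ has a neighbor in $S$) is a split dominating set if $\langle V\setminus S\rangle$ is disconnected or a $K_1$; $\gamma_s(G)$ is the minimum size of a split dominating set. A split independent set is an independent set $S$ with $\langle V\setminus S\rangle$ disconnected or a $K_1$; it is maximal split independent if for every $v\in V\setminus S$, either $S\cup\{v\}$ is not independent or $\langle V\setminus(S\cup\{v\})\rangle$ is connected; $i_s(G)$ is the minimum size of a maximal split independent set. For $u\in S$, a private neighbor of $u$ with respect to $S$ is a vertex $w\in N[u]\setminus N[S\setminus\{u\}]$. A split irredundant set is a set $S$ in which every vertex has a private neighbor with respect to $S$ and with $\langle V\setminus S\rangle$ disconnected or a $K_1$; it is maximal split irredundant if for every $v\in V\setminus S$, either $v$ has no private neighbor with respect to $S\cup\{v\}$ or $\langle V\setminus(S\cup\{v\})\rangle$ is connected; $ir_s(G)$ is the minimum size of a maximal split irredundant set. *)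

(* A finite simple graph is a finType T with an edge
   relation e : rel T, assumed symmetric and irreflexive in the theorem. *)
From mathcomp Require Import all_boot.
Set Implicit Arguments. Unset Strict Implicit. Unset Printing Implicit Defensive.

Section Graph.
Variables (T : finType) (e : rel T).

Definition induced_rel (X : {set T}) : rel T :=
  fun a b => [&& a \in X, b \in X & e a b].

Definition disconnected_ind (X : {set T}) : bool :=
  [exists x in X, exists y in X, ~~ connect (induced_rel X) x y].

Definition connected_ind (X : {set T}) : bool := ~~ disconnected_ind X.

Definition split_compl (S : {set T}) : bool :=
  (#|~: S| == 1) || disconnected_ind (~: S).

Definition closed_nbhd (X : {set T}) : {set T} :=
  [set w | [exists x in X, (w == x) || e x w]].

Definition vertex_cut (S : {set T}) : bool := split_compl S.

Definition dominating (S : {set T}) : bool :=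
  [forall v in ~: S, exists u in S, e u v].

Definition split_dominating (S : {set T}) : bool :=
  dominating S && split_compl S.

Definition independent (S : {set T}) : bool :=
  [forall u in S, forall v in S, ~~ e u v].

Definition split_independent (S : {set T}) : bool :=
  independent S && split_compl S.

Definition maximal_split_independent (S : {set T}) : bool :=
  split_independent S &&
  [forall v in ~: S, ~~ independent (v |: S) || connected_ind (~: (v |: S))].

Definition private_nbr (S : {set T}) (u w : T) : bool :=
  (w \in closed_nbhd [set u]) && (w \notin closed_nbhd (S :\ u)).

Definition has_private_nbr (S : {set T}) (u : T) : bool :=
  [exists w, private_nbr S u w].

Definition split_irredundant (S : {set T}) : bool :=
  [forall u in S, has_private_nbr S u] && split_compl S.

Definition maximal_split_irredundant (S : {set T}) : bool :=
  split_irredundant S &&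
  [forall v in ~: S, ~~ has_private_nbr (v |: S) v || connected_ind (~: (v |: S))].

(* minimum of #|S| over sets S satisfying P (value #|T| if there is none) *)
Definition min_card (P : pred {set T}) : nat :=
  \big[minn/#|T|]_(S : {set T} | P S) #|S|.

Definition connectivity : nat := min_card vertex_cut.
Definition split_domination_number : nat := min_card split_dominating.
Definition split_independence_number : nat := min_card maximal_split_independent.
Definition split_irredundance_number : nat := min_card maximal_split_irredundant.

End Graph.

From mathcomp Require Import all_boot all_order.
Import Order.TTheory.

(* Split dominating, maximal split irredundant and maximal split independent
   sets all have a complement inducing K_1 or a disconnected graph, so they
   are vertex cut sets; each parameter is thus a minimum over a subfamily of
   the sets defining k(G). *)

Lemma min_card_le (T : finType) (P : pred {set T}) (S : {set T}) :
  P S -> min_card P <= #|S|.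
Proof. exact: (@bigmin_le_cond _ nat). Qed.

Lemma min_card_sub (T : finType) (P Q : pred {set T}) :
  subpred P Q -> min_card Q <= min_card P.
Proof.
move=> PQ; apply: (@le_bigmin _ nat); first exact: (@bigmin_le_id _ nat).
by move=> S /PQ; exact: min_card_le.
Qed.

Section SplitSetsAreCuts.
Variables (T : finType) (e : rel T).

Lemma split_dominating_cut : subpred (split_dominating e) (vertex_cut e).
Proof. by move=> S /andP[]. Qed.

Lemma maximal_split_irredundant_cut :
  subpred (maximal_split_irredundant e) (vertex_cut e).
Proof. by move=> S /andP[/andP[]]. Qed.

Lemma maximal_split_independent_cut :
  subpred (maximal_split_independent e) (vertex_cut e).
Proof. by move=> S /andP[/andP[]]. Qed.

End SplitSetsAreCuts.

Theorem mainTheorem7 (T : finType) (e : rel T)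
  (e_sym : symmetric e) (e_irr : irreflexive e)
  (G_conn : forall x y : T, connect e x y)
  (no_isolated : forall x : T, exists y : T, e x y) :
  connectivity e <= split_domination_number e /\
  ((exists S : {set T}, split_irredundant e S) ->
     connectivity e <= split_irredundance_number e) /\
  ((exists S : {set T}, split_independent e S) ->
     connectivity e <= split_independence_number e).
Proof.
split; [|split=> _]; apply: min_card_sub.
- exact: split_dominating_cut.
- exact: maximal_split_irredundant_cut.
- exact: maximal_split_independent_cut.
Qed.
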